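(* Let $\mathcal{A}$ be a parity game arena and $\mathcal{A}_\bot$ its escape arena. For $i\in\{0,1\}$ and every vertex $s\in V$, player $i$ wins $s$ in the parity game on $\mathcal{A}$ if and only if player $i$ wins $s$ in $\mathcal{A}_\bot$.
   Context: Parity game arena: $\mathcal{A}=(V,E,o,c)$ with $V$ finite, $E\subseteq V\times V$, every vertex has a successor, owner map $o:V\to\{0,1\}$, colouring $c:V\to\{0,\dots,d-1\}$; $V_i=o^{-1}(i)$. A (memoryless) strategy of player $i$ is a set $\sigma$ of edges leaving $V_i$ with at least one edge out of each vertex of $V_i$ that has a successor; $\mathcal{A}|_\sigma$ keeps all edges of the other player and only the edges in $\sigma$ for player $i$. In the parity game on $\mathcal{A}$ plays are infinite paths, an infinite play is won by player $0$ iff the largest colour occurring infinitely often is even, and player $i$ wins $s$ if he has a strategy $\sigma$ such that he wins every play from $s$ in $\mathcal{A}|_\sigma$. Escape arena $\mathcal{A}_\bot$: vertices $V\cup\{\bot\}$, edges $E\cup(V_0\times\{\bot\})$, $\bot$ owned by player $0$ with no outgoing edges; plays are maximal paths (infinite or ending in $\bot$). Colour profiles $\mathcal{P}=\mathbb{Z}^d\cup\{-\infty,\infty\}$: a finite play $\pi$ ending in $\bot$ has value $\wp(\pi)\in\mathbb{Z}^d$ whose $k$-th coordinate counts the vertices of $V$ on $\pi$ with colour $k$; an infinite play has value $\infty$ if won by player $0$ under the parity condition and $-\infty$ otherwise. Total order $\prec$: $-\infty$ least, $\infty$ greatest; for distinct $p,p'\in\mathbb{Z}^d$ with $k$ the largest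 index where they differ, $p\prec p'$ iff ($k$ even and $p_k<p'_k$) or ($k$ odd and $p_k>p'_k$). Let $\overline{\wp}$ be the $\prec$-maximal value of an acyclic path in $\mathcal{A}_\bot$ ending in $\bot$ (taken to be $-\infty$ if there is none). In $\mathcal{A}_\bot$, player $0$ wins a play $\pi$ iff $\wp(\pi)\succ\overline{\wp}$, otherwise player $1$ wins it; player $i$ wins a vertex $s$ in $\mathcal{A}_\bot$ if he has a strategy $\sigma$ in $\mathcal{A}_\bot$ such that he wins every play from $s$ in $\mathcal{A}_\bot|_\sigma$. *)

From mathcomp Require Import all_boot all_order all_algebra.
From Stdlib Require Import ClassicalEpsilon.
Set Implicit Arguments. Unset Strict Implicit. Unset Printing Implicit Defensive.
Import Order.TTheory GRing.Theory Num.Theory.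

(* Players are 'I_2 (player 0 = ord0, player 1 = the other one). *)

Section Arena.
Variable T : finType.

(* sigma is a (memoryless) strategy of player i: a set of edges leaving
   vertices of player i, with at least one edge out of each vertex of
   player i that has a successor. *)
Definition is_strategy (R : rel T) (own : T -> 'I_2) (i : 'I_2)
    (sigma : rel T) : Prop :=
  (forall u w, sigma u w -> R u w /\ own u = i) /\
  (forall u, own u = i -> (exists w, R u w) -> exists w, sigma u w).

Definition restrict (R : rel T) (own : T -> 'I_2) (i : 'I_2)
    (sigma : rel T) : rel T :=
  fun u w => if own u == i then sigma u w else R u w.

Definition inf_path (R : rel T) (s : T) (p : nat -> T) : Prop :=
  p 0 = s /\ forall n, R (p n) (p n.+1).
End Arena.

Definition inf_often (f : nat -> nat) (k : nat) : Prop :=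
  forall N, exists n, N <= n /\ f n = k.

Definition parity_win0 (f : nat -> nat) : Prop :=
  exists k, [/\ inf_often f k, ~~ odd k & forall k', inf_often f k' -> k' <= k].

Definition parity_wins_play (i : 'I_2) (f : nat -> nat) : Prop :=
  if val i == 0 then parity_win0 f else ~ parity_win0 f.

Definition wins_parity (V : finType) (E : rel V) (o : V -> 'I_2) (d : nat)
    (c : V -> 'I_d) (i : 'I_2) (s : V) : Prop :=
  exists sigma : rel V, is_strategy E o i sigma /\
    forall p, inf_path (restrict E o i sigma) s p ->
      parity_wins_play i (fun n => val (c (p n))).

Inductive profile (d : nat) : Type :=
  | NegInf
  | Fin of {ffun 'I_d -> int}
  | PosInf.
Arguments NegInf {d}.
Arguments PosInf {d}.

Definition prof_lt (d : nat) (P Q : profile d) : Prop :=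
  match P, Q with
  | NegInf, NegInf => False
  | NegInf, _ => True
  | PosInf, _ => False
  | Fin _, NegInf => False
  | Fin _, PosInf => True
  | Fin p, Fin q =>
      exists k : 'I_d, [/\ p k != q k,
        (forall j : 'I_d, (k < j)%N -> p j = q j) &
        ((~~ odd k /\ (p k < q k)%R) \/ (odd k /\ (q k < p k)%R))]
  end.

Definition prof_le (d : nat) (P Q : profile d) : Prop := prof_lt P Q \/ P = Q.

(** The escape arena: vertices option V, None = bottom. *)
Section Escape.
Variables (V : finType) (E : rel V) (o : V -> 'I_2) (d : nat) (c : V -> 'I_d).

Definition escE : rel (option V) :=
  fun u w => match u, w with
             | Some u', Some w' => E u' w'
             | Some u', None => val (o u') == 0
             | None, _ => false
             end.

Definition esco (u : option V) : 'I_2 :=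
  if u is Some u' then o u' else ord0.

(* colour of a vertex of the escape arena (bot never occurs on infinite plays) *)
Definition escc (u : option V) : nat := if u is Some u' then val (c u') else 0.

Definition fin_value (q : seq (option V)) : profile d :=
  Fin [ffun k : 'I_d =>
         Posz (count (fun x => if x is Some v then c v == k else false) q)].

Definition inf_value (p : nat -> option V) : profile d :=
  if excluded_middle_informative (parity_win0 (fun n => escc (p n))) then PosInf else NegInf.

(* acyclic path in the escape arena, starting at v in V, ending in bot:
   the vertex sequence is v :: q *)
Definition acyclic_bot_path (v : V) (q : seq (option V)) : Prop :=
  [/\ path escE (Some v) q, last (Some v) q = None & uniq (Some v :: q)].

Definition is_max_acyclic (P : profile d) : Prop :=
  ((forall v q, ~ acyclic_bot_path v q) /\ P = NegInf) \/
  ((exists v q, acyclic_bot_path v q /\ P = fin_value (Some v :: q)) /\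
   (forall v q, acyclic_bot_path v q -> prof_le (fin_value (Some v :: q)) P)).

Definition max_acyclic_value : profile d :=
  epsilon (inhabits NegInf) is_max_acyclic.

Definition escape_wins_play (i : 'I_2) (x : profile d) : Prop :=
  if val i == 0 then prof_lt max_acyclic_value x
  else ~ prof_lt max_acyclic_value x.

Definition wins_escape (i : 'I_2) (s : V) : Prop :=
  exists sigma : rel (option V), is_strategy escE esco i sigma /\
    (forall p, inf_path (restrict escE esco i sigma) (Some s) p ->
        escape_wins_play i (inf_value p)) /\
    (forall q, path (restrict escE esco i sigma) (Some s) q ->
        last (Some s) q = None ->
        escape_wins_play i (fin_value (Some s :: q))).
End Escape.

(* An escaping play of A_bot ends in bot after a finite path; cutting a cycle out of it
   removes that cycle's colours, which raises the colour profile when the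
   largest colour on the cycle is odd.  Against a player-1 strategy winning the parity
   game, every cycle closed from s has odd largest colour (otherwise the lasso repeating
   it would be a play won by player 0), so every escaping play is dominated by an
   acyclic one and thus by the maximal acyclic value.  Conversely, a winning escape
   strategy of player 0 never reaches bot: shortening such a play to an acyclic one
   would give a value below the maximal one.  On infinite plays the two games agree,
   since their value is +oo or -oo according to the parity condition and the maximal
   acyclic value lies strictly in between. *)

From mathcomp Require Import all_boot all_order all_algebra.
From mathcomp Require Import zify.
From Stdlib Require Import ClassicalEpsilon.
Set Implicit Arguments. Unset Strict Implicit. Unset Printing Implicit Defensive.
Import Order.TTheory.

Section ProfileOrder.
Variable d : nat.
Implicit Types P Q R : profile d.

Lemma prof_lt_asym P Q : prof_lt P Q -> prof_lt Q P -> False.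
Proof.
case: P => [|p|]; case: Q => [|q|] //= [k1 [n1 e1 s1]] [k2 [n2 e2 s2]].
have [lt12|lt21|/val_inj eq12] := ltngtP k1 k2.
- by rewrite (e1 _ lt12) eqxx in n2.
- by rewrite (e2 _ lt21) eqxx in n1.
- subst k2; case: s1 s2 => [[ev1 l1]|[od1 l1]] [[ev2 l2]|[od2 l2]].
  + by have := lt_trans l1 l2; rewrite ltxx.
  + by rewrite od2 in ev1.
  + by rewrite od1 in ev2.
  + by have := lt_trans l1 l2; rewrite ltxx.
Qed.

Lemma prof_le_lt_asym P Q : prof_le P Q -> prof_lt Q P -> False.
Proof. by case=> [/prof_lt_asym//|-> hPP]; exact (prof_lt_asym hPP hPP). Qed.

Lemma prof_lt_trans P Q R : prof_lt P Q -> prof_lt Q R -> prof_lt P R.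
Proof.
case: P => [|p|]; case: Q => [|q|]; case: R => [|r|] //=.
move=> [k1 [n1 e1 s1]] [k2 [n2 e2 s2]].
have [lt12|lt21|/val_inj eq12] := ltngtP k1 k2.
- exists k2; rewrite (e1 _ lt12); split=> // j hj.
  by rewrite (e1 _ (ltn_trans lt12 hj)) e2.
- exists k1; rewrite -(e2 _ lt21); split=> // j hj.
  by rewrite e1 // e2 //; apply: ltn_trans lt21 hj.
- subst k2; exists k1.
  have s3 : (~~ odd k1 /\ (p k1 < r k1)%R) \/ (odd k1 /\ (r k1 < p k1)%R).
    case: s1 s2 => [[ev1 l1]|[od1 l1]] [[ev2 l2]|[od2 l2]].
    + by left; split=> //; apply: lt_trans l1 l2.
    + by rewrite od2 in ev1.
    + by rewrite od1 in ev2.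
    + by right; split=> //; apply: lt_trans l2 l1.
  split=> //; last by move=> j hj; rewrite e1 // e2.
  by case: s3 => [[_ l]|[_ l]]; rewrite neq_lt l ?orbT.
Qed.

Lemma prof_le_trans P Q R : prof_le P Q -> prof_le Q R -> prof_le P R.
Proof.
case=> [hPQ [hQR|<-]|-> //]; left=> //; exact: prof_lt_trans hPQ hQR.
Qed.

Lemma prof_lt_total (p q : {ffun 'I_d -> int}) :
  [\/ p = q, prof_lt (Fin p) (Fin q) | prof_lt (Fin q) (Fin p)].
Proof.
have [/existsP [k0 hk0]|] := boolP [exists k, p k != q k]; last first.
  by rewrite negb_exists => /forallP hpq; apply: Or31; apply/ffunP => k; apply/eqP/negPn.
have [k hk kmax] := @arg_maxnP _ k0 (fun k => p k != q k) val hk0.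
have heq (j : 'I_d) : (k < j)%N -> p j = q j.
  by move=> hj; apply/eqP/negPn/negP => /kmax /=; rewrite leqNgt hj.
have [l|l|e] := ltgtP (p k) (q k); last by rewrite e eqxx in hk.
- case: (boolP (odd k)) => od; [apply: Or33 | apply: Or32]; exists k.
  + by split=> //; [rewrite eq_sym | move=> j /heq -> | right].
  + by split=> //; left.
- case: (boolP (odd k)) => od; [apply: Or32 | apply: Or33]; exists k.
  + by split=> //; right.
  + by split=> //; [rewrite eq_sym | move=> j /heq -> | left].
Qed.

Lemma prof_argmax_seq (X : eqType) (f : X -> {ffun 'I_d -> int}) (l : seq X) :
  l != [::] ->
  exists2 x, x \in l & forall y, y \in l -> prof_le (Fin (f y)) (Fin (f x)).
Proof.
elim: l => [//|x l IHl] _.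
have [->|/IHl [m ml mmax]] := eqVneq l [::].
  by exists x; rewrite ?inE // => y /[!inE] /eqP ->; right.
have [e|lt|lt] := prof_lt_total (f x) (f m).
- exists m; rewrite ?inE ?ml ?orbT // => y /[!inE] /orP[/eqP->|/mmax//].
  by rewrite e; right.
- exists m; rewrite ?inE ?ml ?orbT // => y /[!inE] /orP[/eqP->|/mmax//].
  by left.
- exists x; rewrite ?inE ?eqxx // => y /[!inE] /orP[/eqP->|/mmax h]; first by right.
  by apply: prof_le_trans h (or_introl lt).
Qed.

Lemma prof_lt_NegInf P : ~ prof_lt P NegInf.
Proof. by case: P => [|p|] /= []. Qed.

End ProfileOrder.

Fixpoint seqs_upto (T : finType) (n : nat) : seq (seq T) :=
  if n is n'.+1 then [::] :: [seq x :: s | x <- enum T, s <- seqs_upto T n']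
  else [:: [::]].

Lemma mem_seqs_upto (T : finType) n (s : seq T) : size s <= n -> s \in seqs_upto T n.
Proof.
elim: n s => [|n IHn] [|x s] //= hs; rewrite inE; apply/orP; right.
by apply/allpairsP; exists (x, s); rewrite mem_enum IHn.
Qed.

Lemma notuniq_decomp (T : eqType) (l : seq T) :
  ~~ uniq l -> exists a x b r, l = a ++ x :: b ++ x :: r.
Proof.
elim: l => [//|y l IHl] /=; rewrite negb_and negbK => /orP [/splitPr [b r]|/IHl].
  by exists [::], y, b, r.
by move=> [a [x [b [r ->]]]]; exists (y :: a), x, b, r.
Qed.

Lemma cycle_nth_step (T : Type) (x0 : T) (e : rel T) (c : seq T) m :
  cycle e c -> 0 < size c ->
  e (nth x0 c (m %% size c)) (nth x0 c (m.+1 %% size c)).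
Proof.
case: c => [//|y b] hc _; set N := size (y :: b).
have hr : m %% N < N by rewrite ltn_pmod.
have -> : m.+1 %% N = (m %% N).+1 %% N by rewrite -addn1 -modnDml addn1.
have := sortedP x0 (hc : sorted e (rcons (y :: b) y)) (m %% N).
rewrite size_rcons ltnS => /(_ hr); rewrite !nth_rcons -/N hr.
move: hr; rewrite leq_eqVlt => /orP [/eqP eqN|lt].
  by rewrite eqN ltnn eqxx modnn.
by rewrite lt (modn_small lt).
Qed.

Section Lasso.
Variables (T : eqType) (x0 : T) (a c : seq T).
Hypothesis c_gt0 : 0 < size c.

Definition lasso (n : nat) : T :=
  if n < size a then nth x0 a n else nth x0 c ((n - size a) %% size c).

Lemma lasso_prefix n : n <= size a -> lasso n = nth x0 (a ++ c) n.
Proof.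
rewrite /lasso nth_cat leq_eqVlt => /orP [/eqP->|->] //.
by rewrite ltnn subnn mod0n.
Qed.

Lemma lasso_path (e : rel T) :
  sorted e (a ++ c) -> cycle e c -> forall n, e (lasso n) (lasso n.+1).
Proof.
move=> hac hc n; have [hn|hn] := ltnP n (size a).
  rewrite !lasso_prefix ?(ltnW hn) //; apply: (sortedP x0 hac).
  by rewrite size_cat; lia.
rewrite /lasso ltnNge hn ltnNge (leqW hn) /= subSn //.
exact: cycle_nth_step.
Qed.

Lemma lasso_tail n : size a <= n -> lasso n \in c.
Proof. by move=> hn; rewrite /lasso ltnNge hn /= mem_nth ?ltn_pmod. Qed.

Lemma lasso_recurrent j N : j < size c -> exists n, N <= n /\ lasso n = nth x0 c j.
Proof.
move=> hj; exists (size a + (N * size c + j)); split.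
  by rewrite (leq_trans (leq_pmulr N c_gt0)) // addnCA leq_addr.
by rewrite /lasso ltnNge leq_addr /= addKn modnMDl modn_small.
Qed.

Lemma lasso_parity_win0 (f : T -> nat) j :
  j < size c -> ~~ odd (f (nth x0 c j)) ->
  {in c, forall z, f z <= f (nth x0 c j)} ->
  parity_win0 (fun n => f (lasso n)).
Proof.
move=> hj hev hmax; exists (f (nth x0 c j)); split=> //.
  by move=> N; have [n [hn <-]] := lasso_recurrent N hj; exists n.
by move=> k hk; have [n [hn <-]] := hk (size a); apply/hmax/lasso_tail.
Qed.

End Lasso.

Lemma parity_win0_eq f g : f =1 g -> parity_win0 f -> parity_win0 g.
Proof.
move=> fg [k [hk hev hmax]]; exists k; split=> //.
  by move=> N; have [n [hn <-]] := hk N; exists n; rewrite fg.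
by move=> k' hk'; apply: hmax => N; have [n [hn <-]] := hk' N; exists n; rewrite fg.
Qed.

Lemma parity_wins_play_eq i f g :
  f =1 g -> parity_wins_play i f -> parity_wins_play i g.
Proof.
rewrite /parity_wins_play => fg; case: ifP => _; first exact: parity_win0_eq.
by move=> nf /(parity_win0_eq (fsym fg)).
Qed.

Lemma ord2_cases (i : 'I_2) : val i = 0 \/ val i = 1.
Proof. by case: i => [[|[|]]] //=; auto. Qed.

Lemma restrict_sub (T : finType) (R : rel T) {own : T -> 'I_2} {i : 'I_2}
    (sigma : rel T) :
  subrel sigma R -> subrel (restrict R own i sigma) R.
Proof. by move=> hsub u w; rewrite /restrict; case: ifP => // _ /hsub. Qed.

Lemma inf_path_Some (T : finType) (G : rel (option T)) s p :
  (forall w, G None w = false) -> inf_path G (Some s) p ->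
  inf_path (fun u w => G (Some u) (Some w)) s (fun n => odflt s (p n)) /\
  forall n, p n = Some (odflt s (p n)).
Proof.
move=> hNone [hp0 hp].
have hpS n : p n = Some (odflt s (p n)).
  by case e: (p n) => [v|] //; have := hp n; rewrite e hNone.
by split=> //; split=> [|n]; [rewrite hp0 | rewrite -!hpS].
Qed.

Section Escape.
Variables (V : finType) (E : rel V) (o : V -> 'I_2) (d : nat) (c : V -> 'I_d).
Hypothesis E_total : forall v : V, exists w, E v w.

Local Notation Ebot := (escE E o).
Local Notation obot := (esco o).
Local Notation M := (max_acyclic_value E o c).
Local Notation colour_is k :=
  (fun x : option V => if x is Some w then c w == k else false).

Lemma exists_max_acyclic : exists P, is_max_acyclic E o c P.
Proof.
pose acyclicb (vq : V * seq (option V)) := [&& path Ebot (Some vq.1) vq.2,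
  last (Some vq.1) vq.2 == None & uniq (Some vq.1 :: vq.2)].
pose cand := [seq vq <- [seq (v, q) | v <- enum V,
  q <- seqs_upto (option V) #|{: option V}|] | acyclicb vq].
have mem_cand v q : acyclic_bot_path E o v q -> (v, q) \in cand.
  case=> h1 h2 h3; rewrite mem_filter; apply/andP; split.
    by rewrite /acyclicb /= h1 h2 eqxx.
  apply/allpairsP; exists (v, q); rewrite mem_enum mem_seqs_upto //.
  by apply/ltnW; rewrite -[_ < _]/(size (Some v :: q) <= _) -(card_uniqP h3) max_card.
have [hnil|hne] := eqVneq cand [::].
  by exists NegInf; left; split=> // v q /mem_cand; rewrite hnil.
pose f (vq : V * seq (option V)) :=
  [ffun k : 'I_d => Posz (count (colour_is k) (Some vq.1 :: vq.2))].
have [[v q] hin hmax] := prof_argmax_seq f hne.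
exists (fin_value c (Some v :: q)); right; split.
  by exists v, q; move: hin; rewrite mem_filter => /andP [/and3P [h1 /eqP h2 h3] _].
by move=> v' q' /mem_cand /hmax.
Qed.

Lemma max_acyclic_valueP : is_max_acyclic E o c M.
Proof. exact: epsilon_spec exists_max_acyclic. Qed.

Lemma acyclic_le_max v q :
  acyclic_bot_path E o v q -> prof_le (fin_value c (Some v :: q)) M.
Proof.
move=> hac; case: max_acyclic_valueP => [[hno _]|[_ hall]]; last exact: hall.
by case: (hno _ _ hac).
Qed.

Lemma max_acyclic_lt_PosInf : prof_lt M PosInf.
Proof. by case: max_acyclic_valueP => [[_ ->]|[[v [q [_ ->]]] _]]. Qed.

Lemma escape_wins_inf_value i p :
  escape_wins_play E o c i (inf_value c p) <->
  parity_wins_play i (fun n => escc c (p n)).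
Proof.
rewrite /escape_wins_play /parity_wins_play /inf_value.
have := @max_acyclic_lt_PosInf; have := @prof_lt_NegInf _ M.
by case: excluded_middle_informative => hw; case: ifP => _; split.
Qed.

Lemma fin_value_cycle_lt a cyc r v :
  odd (c v) -> Some v \in cyc -> {in cyc, forall z, escc c z <= c v} ->
  prof_lt (fin_value c (a ++ cyc ++ r)) (fin_value c (a ++ r)).
Proof.
move=> hodd hv hmax.
have hpos : 0 < count (colour_is (c v)) cyc.
  by rewrite -has_count; apply/hasP; exists (Some v).
have hzero (j : 'I_d) : c v < j -> count (colour_is j) cyc = 0.
  move=> hj; apply/eqP; rewrite -leqn0 leqNgt -has_count; apply/hasP.
  case=> [[w|] //= /hmax hw /eqP hcw]; move: hw; rewrite /= hcw; lia.
exists (c v); rewrite !ffunE !count_cat; split.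
- by apply/negP => /eqP [] h; lia.
- by move=> j hj; rewrite !ffunE !count_cat hzero.
- by right; split=> //; rewrite ltz_nat; lia.
Qed.

Definition lift_strategy (sigma : rel V) : rel (option V) :=
  fun u w => if (u, w) is (Some u', Some w') then sigma u' w' else false.

Lemma lift_strategyP i sigma :
  is_strategy E o i sigma -> is_strategy Ebot obot i (lift_strategy sigma).
Proof.
case=> hedge hsucc; split=> [[u|] [w|] //= /hedge //|[u|] hu [w hw]].
- by have [w' hw'] := hsucc u hu (E_total u); exists (Some w').
- by case: w hw.
Qed.

Lemma restrict_escape_None i sigma' w :
  subrel sigma' Ebot -> restrict Ebot obot i sigma' None w = false.
Proof.
by move=> hsub; rewrite /restrict; case: ifP => // _; apply/negbTE/negP => /hsub.
Qed.

Lemma lift_strategy_sub sigma : subrel sigma E -> subrel (lift_strategy sigma) Ebot.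
Proof. by move=> hsub [u|] [w|] //= /hsub. Qed.

Lemma lift_no_escape0 i sigma s q : val i = 0 ->
  path (restrict Ebot obot i (lift_strategy sigma)) (Some s) q ->
  last (Some s) q != None.
Proof.
move=> hi; case/lastP: q => [|q y] //; rewrite rcons_path last_rcons => /andP [_].
case: (last (Some s) q) => [u|]; last by rewrite /restrict; case: ifP.
case: y => [w|] //; rewrite /restrict /=; case: ifP => // /negbT /eqP hne /eqP h0.
by case: hne; apply: val_inj; rewrite /= h0 hi.
Qed.

Section LiftedPlayer1.
Variables (i : 'I_2) (s : V) (tau : rel V).
Hypothesis i_neq0 : val i != 0.
Hypothesis tau_sub : subrel tau E.
Hypothesis tau_wins : forall p, inf_path (restrict E o i tau) s p ->
  parity_wins_play i (fun n => val (c (p n))).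

Local Notation G := (restrict Ebot obot i (lift_strategy tau)).

Lemma lifted_play_loses p : inf_path G (Some s) p ->
  ~ parity_win0 (fun n => escc c (p n)).
Proof.
have hNone w : G None w = false by apply/restrict_escape_None/lift_strategy_sub.
move=> hp; have [hp' hpS] := inf_path_Some hNone hp.
have := tau_wins hp'; rewrite /parity_wins_play (negbTE i_neq0).
by apply: contra_not; apply: parity_win0_eq => n; rewrite hpS.
Qed.

Lemma lifted_cycle_odd a cyc :
  sorted G (a ++ cyc) -> cycle G cyc -> 0 < size cyc ->
  head None (a ++ cyc) = Some s ->
  exists v, [/\ odd (c v), Some v \in cyc & {in cyc, forall z, escc c z <= c v}].
Proof.
move=> hac hcyc hcyc0 hhead.
pose F (j : 'I_(size cyc)) := escc c (nth None cyc j).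
have hcard : 0 < #|'I_(size cyc)| by rewrite card_ord.
have [j hj] := bigop.eq_bigmax F hcard.
have hmax : {in cyc, forall z, escc c z <= F j}.
  move=> z zin; have zidx : index z cyc < size cyc by rewrite index_mem.
  by rewrite -hj -(nth_index None zin); exact: (@leq_bigmax _ F (Ordinal zidx)).
have hodd : odd (F j).
  apply/negPn/negP => hev; apply: (@lifted_play_loses (lasso None a cyc)).
    by split=> [|n]; [rewrite lasso_prefix // nth0 | apply: lasso_path].
  exact: lasso_parity_win0 (ltn_ord j) hev hmax.
(* The maximum is not attained at bot, whose colour 0 is even. *)
move: hodd hmax; rewrite /F; case hjv: (nth None cyc j) => [v|] // hodd hmax.
by exists v; split=> //; rewrite -hjv mem_nth.
Qed.

Lemma lifted_play_le_max L :
  sorted G L -> head None L = Some s -> last None L = None ->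
  prof_le (fin_value c L) M.
Proof.
have [n] := ubnP (size L); elim: n L => // n IHn L hsize hL hhead hlast.
have [hu|/notuniq_decomp [a [x [b [r eL]]]]] := boolP (uniq L).
  case: L hhead hL hlast hu {hsize} => [//|y q] /= -> hq hlast hu.
  apply: acyclic_le_max; split=> //; apply: sub_path hq.
  exact/restrict_sub/lift_strategy_sub.
rewrite {}eL in hsize hL hhead hlast *.
have hpre : sorted G (a ++ x :: b).
  by move: hL; rewrite -cat_cons catA => /cat_sorted2 [].
have [hcyc hL'] : cycle G (x :: b) /\ sorted G (a ++ x :: r).
  move: hL; rewrite sorted_cat_cons cat_path /= => /and4P [hax hxb hbx hxr].
  by split; [rewrite /= rcons_path hxb | rewrite sorted_cat_cons hax].
have hhead' : head None (a ++ x :: b) = Some s by rewrite -hhead; case: (a).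
have [v [hodd hv hmax]] := lifted_cycle_odd hpre hcyc (ltn0Sn _) hhead'.
apply: prof_le_trans (or_introl (fin_value_cycle_lt a (x :: r) hodd hv hmax)) _.
apply: IHn hL' _ _.
- by move: hsize; rewrite !size_cat /= !size_cat /=; lia.
- by rewrite -hhead; case: (a).
- by rewrite -hlast !last_cat /= last_cat.
Qed.

End LiftedPlayer1.

Section FromEscape.
Variables (i : 'I_2) (s : V) (sigma' : rel (option V)).
Hypothesis sigma'_strategy : is_strategy Ebot obot i sigma'.

Local Notation G := (restrict Ebot obot i sigma').

Lemma strategy_sub : subrel sigma' Ebot.
Proof. by move=> u w /sigma'_strategy.1 []. Qed.

(* Where [sigma'] can only move to bot, the vertex is unreachable in a winning play,
   so any edge will do there. *)
Definition drop_escape : rel V := fun u w => (o u == i) &&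
  (if [exists w', sigma' (Some u) (Some w')] then sigma' (Some u) (Some w) else E u w).

Lemma drop_escape_strategy : is_strategy E o i drop_escape.
Proof.
split=> [u w /andP [/eqP hu]|u hu [w hw]].
  by case: ifP => _ // /sigma'_strategy.1 [].
have [/existsP [w' hw']|hnex] := boolP [exists w', sigma' (Some u) (Some w')].
  by exists w'; rewrite /drop_escape hu eqxx /=; case: existsP => // [[]]; exists w'.
by exists w; rewrite /drop_escape hu eqxx (negbTE hnex).
Qed.

Lemma drop_escape_play p :
  (forall q u, path G (Some s) q -> last (Some s) q = Some u -> o u = i ->
     exists w, sigma' (Some u) (Some w)) ->
  inf_path (restrict E o i drop_escape) s p -> inf_path G (Some s) (fun n => Some (p n)).
Proof.
move=> hsucc [hp0 hp].
have hedge q u w : path G (Some s) q -> last (Some s) q = Some u ->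
    restrict E o i drop_escape u w -> G (Some u) (Some w).
  move=> hq hl; rewrite /restrict /=; case: ifP => [/eqP hu|_] //.
  have [w' hw'] := hsucc q u hq hl hu.
  by rewrite /drop_escape hu eqxx (_ : [exists _, _]) //; apply/existsP; exists w'.
have hreach n : exists q, path G (Some s) q /\ last (Some s) q = Some (p n).
  elim: n => [|n [q [hq hl]]]; first by exists [::]; rewrite hp0.
  exists (rcons q (Some (p n.+1))); rewrite rcons_path last_rcons hq hl.
  by split=> //; apply: hedge hq hl (hp n).
split=> [|n]; first by rewrite hp0.
by have [q [hq hl]] := hreach n; apply: hedge hq hl (hp n).
Qed.

Lemma escape_successor1 u : val i = 1 -> o u = i -> exists w, sigma' (Some u) (Some w).
Proof.
move=> hi hu; have [w0 hw0] := E_total u.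
have [[w|] hw] := sigma'_strategy.2 (Some u) hu (ex_intro _ (Some w0) hw0).
  by exists w.
by have /= := strategy_sub hw; rewrite hu hi.
Qed.

Section Player0.
Hypothesis i_eq0 : val i = 0.
Hypothesis sigma'_wins_finite : forall q, path G (Some s) q ->
  last (Some s) q = None -> escape_wins_play E o c i (fin_value c (Some s :: q)).

Lemma escape_win0_avoids_bot q : path G (Some s) q -> last (Some s) q != None.
Proof.
move=> hq; apply/negP; case: (shortenP hq) => q' hq' hu _ /eqP hl.
have := sigma'_wins_finite hq' hl; rewrite /escape_wins_play i_eq0 /=.
apply: prof_le_lt_asym; apply: acyclic_le_max; split=> //.
by apply: sub_path hq'; exact/restrict_sub/strategy_sub.
Qed.

Lemma escape_successor0 q u : path G (Some s) q -> last (Some s) q = Some u ->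
  o u = i -> exists w, sigma' (Some u) (Some w).
Proof.
move=> hq hl hu; have hbot : Ebot (Some u) None by rewrite /= hu i_eq0.
have [[w|] hw] := sigma'_strategy.2 (Some u) hu (ex_intro _ None hbot).
  by exists w.
have := @escape_win0_avoids_bot (rcons q None).
by rewrite rcons_path last_rcons hq hl /restrict /= hu eqxx hw => /(_ isT).
Qed.

End Player0.
End FromEscape.

Lemma parity_to_escape i s : wins_parity E o c i s -> wins_escape E o c i s.
Proof.
move=> [sigma [hsigma hwin]]; exists (lift_strategy sigma).
split; first exact: lift_strategyP.
have sigma_sub : subrel sigma E by move=> u w /hsigma.1 [].
split=> [p hp|q hq hlast].
  have hNone w : restrict Ebot obot i (lift_strategy sigma) None w = false.
    exact/restrict_escape_None/lift_strategy_sub.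
  have [hp' hpS] := inf_path_Some hNone hp.
  apply/escape_wins_inf_value; apply: parity_wins_play_eq (hwin _ hp') => n.
  by rewrite hpS.
have [hi|hi] := ord2_cases i.
  by have := lift_no_escape0 hi hq; rewrite hlast.
rewrite /escape_wins_play hi /=; apply: prof_le_lt_asym.
have hi0 : val i != 0 by rewrite hi.
exact: (lifted_play_le_max hi0 sigma_sub hwin (L := Some s :: q) hq erefl hlast).
Qed.

Lemma escape_to_parity i s : wins_escape E o c i s -> wins_parity E o c i s.
Proof.
move=> [sigma' [hsigma' [hinf hfin]]].
have hsucc q u : path (restrict Ebot obot i sigma') (Some s) q ->
    last (Some s) q = Some u -> o u = i -> exists w, sigma' (Some u) (Some w).
  have [hi|hi] := ord2_cases i; first exact: (escape_successor0 hsigma' hi hfin).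
  by move=> _ _; apply: escape_successor1.
exists (drop_escape i sigma'); split; first exact: drop_escape_strategy.
by move=> p /(drop_escape_play hsucc) /hinf /escape_wins_inf_value.
Qed.

End Escape.

Theorem mainTheorem4 (V : finType) (E : rel V) (o : V -> 'I_2) (d : nat)
    (c : V -> 'I_d) (Htot : forall v : V, exists w, E v w)
    (i : 'I_2) (s : V) :
  wins_parity E o c i s <-> wins_escape E o c i s.
Proof. by split; [exact: parity_to_escape | exact: escape_to_parity]. Qed.
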